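(* Let $1\le t$ and $x_{1:t}\in\mathcal X^t$. Then for every $i\in\mathcal X$, $$P_{\mathrm{Bayes}}(x_{t+1}=i\mid x_{1:t}) = \begin{cases}\dfrac{n^t_i+\frac12}{t+\frac{m_t}2+\beta_t} & \text{if } n^t_i>0,\\[2ex] \dfrac{\beta_t/(D-m_t)}{t+\frac{m_t}2+\beta_t} & \text{if } n^t_i=0,\end{cases}\qquad \beta_t:=\frac{D-m_t}{2}\,\frac{\gamma^t_{m_t+1}}{\gamma^t_{m_t}},$$ where for $1\le k\le D$, $\gamma^t_k:=\sum_{m'=k}^{D}\binom{D-k}{m'-k}\binom{D}{m'}^{-1}\frac{\Gamma(\frac12 m')}{\Gamma(t+1+\frac12 m')}$ and $\gamma^t_{D+1}:=0$ (the second case arising only when $m_t<D$).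
   Context: Let $\mathcal X$ be a finite alphabet of size $D$. For $x_{1:t}$, $n^t_i$ is the number of occurrences of $i$, $\mathcal A_t=\{x_1,\dots,x_t\}$, $m_t=|\mathcal A_t|$. For a nonempty $\mathcal A'\subseteq\mathcal X$, the KT estimator on $\mathcal A'$ assigns to a sequence $y_{1:s}$ the probability $P_{\mathrm{KT}_{\mathcal A'}}(y_{1:s})=\frac{\Gamma(|\mathcal A'|/2)}{\Gamma(s+|\mathcal A'|/2)}\prod_{i\in\mathcal A'}\frac{\Gamma(c_i+\frac12)}{\Gamma(\frac12)}$ if all symbols of $y_{1:s}$ lie in $\mathcal A'$ (with $c_i$ the count of $i$ in $y_{1:s}$), and $0$ otherwise. Bayesian sub-alphabet weighting: $P_{\mathrm{Bayes}}(y_{1:s})=\sum_{\emptyset\ne\mathcal A'\subseteq\mathcal X}\frac{1}{D\binom{D}{|\mathcal A'|}}P_{\mathrm{KT}_{\mathcal A'}}(y_{1:s})$, and $P_{\mathrm{Bayes}}(x_{t+1}=i\mid x_{1:t})=P_{\mathrm{Bayes}}(x_{1:t}i)/P_{\mathrm{Bayes}}(x_{1:t})$. *)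

From HB Require Import structures.
From mathcomp Require Import all_boot all_order all_algebra.
Set Implicit Arguments. Unset Strict Implicit. Unset Printing Implicit Defensive.
Import Order.TTheory GRing.Theory Num.Theory.
Local Open Scope ring_scope.

(* An abstract Gamma function on a real field: any G with the functional
   equation G(x+1) = x G(x) and G(x) > 0 for x > 0 (the Euler Gamma function
   satisfies this).  Only ratios G(a+n)/G(a) with a > 0 occur below, and these
   are determined by the hypotheses. *)
Definition is_Gamma (R : realFieldType) (G : R -> R) : Prop :=
  (forall x : R, 0 < x -> G (x + 1) = x * G x) /\ (forall x : R, 0 < x -> 0 < G x).

Definition symset (X : finType) (x : seq X) : {set X} := [set z | z \in x].

Definition KT (R : realFieldType) (G : R -> R) (X : finType) (A : {set X}) (y : seq X) : R :=
  if all (fun z => z \in A) y then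
    G (#|A|%:R / 2%:R) / G ((size y)%:R + #|A|%:R / 2%:R) *
    \prod_(i in A) (G ((count_mem i y)%:R + 2%:R^-1) / G (2%:R^-1))
  else 0.

Definition PBayes (R : realFieldType) (G : R -> R) (X : finType) (y : seq X) : R :=
  \sum_(A : {set X} | A != set0)
     (#|X|%:R * ('C(#|X|, #|A|))%:R)^-1 * KT G A y.

Definition PBayes_cond (R : realFieldType) (G : R -> R) (X : finType) (x : seq X) (i : X) : R :=
  PBayes G (rcons x i) / PBayes G x.

Definition gammaT (R : realFieldType) (G : R -> R) (X : finType) (t k : nat) : R :=
  if (k <= #|X|)%N then
    \sum_(k <= m' < #|X|.+1)
       ('C(#|X| - k, m' - k))%:R / ('C(#|X|, m'))%:R *
       (G (m'%:R / 2%:R) / G (t.+1%:R + m'%:R / 2%:R))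
  else 0.

Definition betaT (R : realFieldType) (G : R -> R) (X : finType) (t m : nat) : R :=
  (#|X|%:R - m%:R) / 2%:R * (gammaT G X t m.+1 / gammaT G X t m).

From HB Require Import structures.
From mathcomp Require Import all_boot all_order all_algebra.
From mathcomp Require Import ring.
Import Order.TTheory GRing.Theory Num.Theory.
Set Implicit Arguments. Unset Strict Implicit.
Local Open Scope ring_scope.

(* Write D = #|X|, m = #|A_t| and K(y) = prod_{j in X} G(c_j + 1/2)/G(1/2),
   the count factor shared by all the KT estimators that give y positive
   weight (symbols absent from y contribute 1).  The proof has three parts.
   1. Counting: a sum over the supersets A of A_t of a function of |A| is a
      binomially weighted sum over |A| = m + j; hence
        P_Bayes(y) = K(y)/D * Gsum(|y|, |A(y)|),
      where Gsum(s, k) = sum_j C(D-k, j)/C(D, k+j) * G((k+j)/2)/G(s+(k+j)/2)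
      and gamma^t_k = Gsum(t+1, k) for every k (also k = D+1, where it is 0).
   2. Recursion: G(x+1) = x G(x) together with j C(n, j) = n C(n-1, j-1)
      gives Gsum(s, m) = (s + m/2) Gsum(s+1, m) + (D-m)/2 Gsum(s+1, m+1),
      i.e. Gsum(t, m) = (t + m/2 + beta_t) * gamma^t_m.
   3. Prediction: K(x_{1:t} i) = K(x_{1:t}) (n_i + 1/2), so the conditional
      is (n_i + 1/2) Gsum(t+1, |A_t u {i}|) / Gsum(t, m); dividing by the
      recursion yields the two cases of the theorem. *)

(* Summing a function of the cardinality over the subsets of C groups the
   subsets by size. *)
Lemma sum_subsets_card (R : pzSemiRingType) (X : finType) (C : {set X})
    (g : nat -> R) :
  \sum_(B : {set X} | B \subset C) g #|B| =
  \sum_(k < #|C|.+1) ('C(#|C|, k))%:R * g k.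
Proof.
transitivity (\sum_(B : {set X} | B \subset C)
                \sum_(k < #|C|.+1) (if #|B| == k then g k else 0)).
  apply: eq_bigr => B sBC.
  have hB : (#|B| < #|C|.+1)%N by rewrite ltnS subset_leq_card.
  rewrite (bigD1 (Ordinal hB)) //= eqxx big1 ?addr0 // => k.
  by rewrite -val_eqE /= eq_sym => /negbTE ->.
rewrite exchange_big; apply: eq_bigr => k _.
rewrite -big_mkcondr /= -cards_draws -sum1dep_card natr_sum mulr_suml.
by apply: eq_bigr => B _; rewrite mul1r.
Qed.

(* Dually, the supersets of S are S :|: B for the subsets B of ~: S. *)
Lemma sum_supsets_card (R : pzSemiRingType) (X : finType) (S : {set X})
    (h : nat -> R) :
  \sum_(A : {set X} | S \subset A) h #|A| =
  \sum_(j < (#|X| - #|S|).+1) ('C(#|X| - #|S|, j))%:R * h (#|S| + j)%N.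
Proof.
rewrite (reindex_onto (fun B => S :|: B) (fun A => A :\: S)) /=; last first.
  move=> A sSA; apply/setP => z; rewrite !inE.
  by case: (boolP (z \in S)) => //= zS; rewrite (subsetP sSA).
have -> : (#|X| - #|S|)%N = #|~: S| by rewrite -(cardsC S) addKn.
rewrite -(sum_subsets_card (~: S) (fun k => h (#|S| + k)%N)).
apply: eq_big => B.
  rewrite subsetUl /=; apply/eqP/subsetP.
    by move=> <- z; rewrite !inE; case: (z \in S).
  move=> sBS; apply/setP => z; rewrite !inE.
  case: (boolP (z \in B)) => zB /=; last by rewrite ?andbF; case: (z \in S).
  by rewrite orbT andbT; have := sBS z zB; rewrite inE.
move=> /andP [_ /eqP defB]; congr h.
rewrite -cardsUI; suff -> : S :&: B = set0 by rewrite cards0 addn0.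
apply/setP => z; rewrite !inE; apply/negP => /andP [zS zB].
by move: zB; rewrite -defB !inE zS.
Qed.

Lemma sum_absorb_binomial (R : pzSemiRingType) (n : nat) (f : nat -> R) :
  \sum_(j < n.+1) j%:R * ('C(n, j))%:R * f j =
  n%:R * \sum_(j < n) ('C(n.-1, j))%:R * f j.+1.
Proof.
rewrite big_ord_recl /= !mul0r add0r mulr_sumr; apply: eq_bigr => j _.
by rewrite /bump /= add1n -natrM -mul_bin_diag natrM mulrA.
Qed.

Section GammaRatios.

Variables (R : realFieldType) (G : R -> R).
Hypothesis hG : is_Gamma G.

Lemma Gamma_ratio_shift (a s : R) : 0 < s + a ->
  G a / G (s + a) = (s + a) * (G a / G (s + 1 + a)).
Proof.
move=> sa_gt0; have [Gfun Gpos] := hG.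
rewrite addrAC Gfun //; have Gsa_neq0 : G (s + a) != 0 by rewrite gt_eqF ?Gpos.
by field; rewrite Gsa_neq0 gt_eqF.
Qed.

Lemma Gamma_ratio_gt0 (a b : R) : 0 < a -> 0 < b -> 0 < G a / G b.
Proof. by have [_ Gpos] := hG => a_gt0 b_gt0; rewrite divr_gt0 ?Gpos. Qed.

End GammaRatios.

Definition count_factor (R : realFieldType) (G : R -> R) (X : finType)
    (y : seq X) : R :=
  \prod_(j : X) (G ((count_mem j y)%:R + 2%:R^-1) / G (2%:R^-1)).

Lemma all_in_symset (X : finType) (A : {set X}) (y : seq X) :
  all (fun z => z \in A) y = (symset y \subset A).
Proof.
apply/allP/subsetP => H z; last by move=> zy; apply: H; rewrite inE.
by rewrite inE => /H.
Qed.

(* D times the total prior-weighted KT normalisation G(|A|/2)/G(s+|A|/2)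
   over the alphabets A containing k fixed symbols, grouped by |A| = k + j;
   s is the sequence length.  For k > D the only term has C(D, k) = 0, so
   Gsum vanishes there. *)
Definition Gsum (R : realFieldType) (G : R -> R) (X : finType) (s : R)
    (k : nat) : R :=
  \sum_(j < (#|X| - k).+1) ('C(#|X| - k, j))%:R / ('C(#|X|, k + j))%:R *
     (G ((k + j)%N%:R / 2%:R) / G (s + (k + j)%N%:R / 2%:R)).

Lemma gammaT_Gsum (R : realFieldType) (G : R -> R) (X : finType) (t k : nat) :
  gammaT G X t k = Gsum G X t.+1%:R k.
Proof.
rewrite /gammaT /Gsum; case: leqP => [kD | Dk].
  rewrite -{1}(add0n k) big_addn subSn // big_mkord; apply: eq_bigr => j _.
  by rewrite addnK addnC.
rewrite (eqP (ltnW Dk : (#|X| - k == 0)%N)) big_ord1 addn0 (bin_small Dk).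
by rewrite invr0 !mulr0 mul0r.
Qed.

Section BayesMixture.

Variables (R : realFieldType) (G : R -> R) (X : finType).
Hypothesis hG : is_Gamma G.

Lemma KT_factor (A : {set X}) (y : seq X) :
  KT G A y = if symset y \subset A then
    G (#|A|%:R / 2%:R) / G ((size y)%:R + #|A|%:R / 2%:R) * count_factor G y
  else 0.
Proof.
rewrite /KT all_in_symset; case: ifP => // sA; congr (_ * _).
rewrite /count_factor [RHS](bigID (mem A)) /= [X in _ = _ * X]big1 ?mulr1 //.
move=> j jA; have jy : j \notin y.
  by apply/negP => jy; move: jA; rewrite (subsetP sA) // inE.
have [_ Gpos] := hG.
by rewrite (count_memPn jy) add0r divff // gt_eqF ?Gpos // invr_gt0 ltr0n.
Qed.

Lemma PBayes_Gsum (y : seq X) : symset y != set0 ->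
  PBayes G y = count_factor G y / #|X|%:R * Gsum G X (size y)%:R #|symset y|.
Proof.
move=> y_ne0.
have -> : PBayes G y = count_factor G y *
    \sum_(A : {set X} | symset y \subset A)
      ((#|X|%:R * ('C(#|X|, #|A|))%:R)^-1 *
       (G (#|A|%:R / 2%:R) / G ((size y)%:R + #|A|%:R / 2%:R))).
  rewrite /PBayes mulr_sumr big_mkcond [RHS]big_mkcond /=.
  apply: eq_bigr => A _; rewrite KT_factor.
  case: (boolP (symset y \subset A)) => sA; last by rewrite mulr0 if_same.
  have -> : A != set0.
    by apply: contraNneq y_ne0 => A0; rewrite -subset0 -A0.
  by rewrite [RHS]mulrC mulrA.
rewrite (sum_supsets_card (symset y) (fun a => (#|X|%:R * ('C(#|X|, a))%:R)^-1 *
     (G (a%:R / 2%:R) / G ((size y)%:R + a%:R / 2%:R)))).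
rewrite /Gsum -mulrA [X in _ = _ * X]mulr_sumr; congr (_ * _).
apply: eq_bigr => j _.
by rewrite invfM; ring.
Qed.

End BayesMixture.

Section GsumRecursion.

Variables (R : realFieldType) (G : R -> R) (X : finType).
Hypothesis hG : is_Gamma G.

(* Each Gamma ratio gains
   the factor s + (m+j)/2; the j/2 part is absorbed into the binomial
   C(D-m, j) and turns the remaining sum into Gsum(s+1, m+1). *)
Lemma Gsum_rec (s : R) (m : nat) : 0 <= s -> (1 <= m)%N ->
  Gsum G X s m = (s + m%:R / 2%:R) * Gsum G X (s + 1) m +
                 (#|X| - m)%N%:R / 2%:R * Gsum G X (s + 1) m.+1.
Proof.
move=> s_ge0 m_ge1; rewrite /Gsum.
set g := fun j : nat => (('C(#|X|, m + j))%:R)^-1 *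
  (G ((m + j)%N%:R / 2%:R) / G (s + 1 + (m + j)%N%:R / 2%:R)).
transitivity (\sum_(j < (#|X| - m).+1)
   ((s + m%:R / 2%:R) * (('C(#|X| - m, j))%:R * g j) +
    j%:R * ('C(#|X| - m, j))%:R * (g j / 2%:R))).
  apply: eq_bigr => j _; have mj_gt0 : (0 : R) < (m + j)%N%:R / 2%:R.
    by rewrite divr_gt0 // ltr0n (leq_trans m_ge1) ?leq_addr.
  by rewrite (Gamma_ratio_shift hG) ?ltr_wpDl // /g natrD; ring.
rewrite big_split /= -mulr_sumr (sum_absorb_binomial _ (fun j => g j / 2%:R)).
congr (_ + _).
  by apply: congr1; apply: eq_bigr => j _; rewrite /g mulrA.
rewrite subnS; case: (#|X| - m)%N => [|n]; first by rewrite !mul0r.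
rewrite /= [RHS]mulr_sumr mulr_sumr; apply: eq_bigr => j _.
by rewrite /g -addSnnS; ring.
Qed.

(* For 1 <= k <= D the leading term (j = 0) is positive. *)
Lemma Gsum_gt0 (s : R) (k : nat) : 0 <= s -> (1 <= k <= #|X|)%N ->
  0 < Gsum G X s k.
Proof.
move=> s_ge0 /andP [k_ge1 kD].
have ratio_gt0 (a : nat) : (1 <= a)%N ->
    (0 : R) < G (a%:R / 2%:R) / G (s + a%:R / 2%:R).
  move=> a_ge1; have a_gt0 : (0 : R) < a%:R / 2%:R by rewrite divr_gt0 ?ltr0n.
  by rewrite (Gamma_ratio_gt0 hG) ?ltr_wpDl.
rewrite /Gsum big_ord_recl /=; apply: ltr_wpDr.
  apply: sumr_ge0 => j _; apply: mulr_ge0; first by rewrite divr_ge0 ?ler0n.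
  by apply/ltW/ratio_gt0; rewrite (leq_trans k_ge1) ?leq_addr.
by rewrite addn0 mulr_gt0 ?ratio_gt0 // divr_gt0 ?ltr0n ?bin_gt0.
Qed.

Lemma Gsum_betaT (t m : nat) : (1 <= m <= #|X|)%N ->
  Gsum G X t%:R m = (t%:R + m%:R / 2%:R + betaT G X t m) * Gsum G X t.+1%:R m.
Proof.
move=> /andP [m_ge1 mD].
have g_neq0 : Gsum G X t.+1%:R m != 0 by rewrite gt_eqF ?Gsum_gt0 ?ler0n ?m_ge1.
rewrite /betaT !gammaT_Gsum -natrB // Gsum_rec ?ler0n // natr1.
by field.
Qed.

End GsumRecursion.

Lemma symset_rcons (X : finType) (x : seq X) (i : X) :
  symset (rcons x i) = i |: symset x.
Proof. by apply/setP => z; rewrite !inE mem_rcons in_cons. Qed.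

Section Prediction.

Variables (R : realFieldType) (G : R -> R) (X : finType).
Hypothesis hG : is_Gamma G.

Lemma count_factor_rcons (x : seq X) (i : X) :
  count_factor G (rcons x i) = count_factor G x * ((count_mem i x)%:R + 2%:R^-1).
Proof.
have [Gfun _] := hG.
have count_rcons j : count_mem j (rcons x i) = (count_mem j x + (i == j))%N.
  by rewrite -cats1 count_cat /= addn0.
rewrite /count_factor (bigD1 i) //= [in RHS](bigD1 i) //= count_rcons eqxx.
rewrite addn1 -natr1 -addrAC Gfun ?ltr_wpDl ?ler0n ?invr_gt0 ?ltr0n //.
rewrite (eq_bigr (fun j => G ((count_mem j x)%:R + 2%:R^-1) / G (2%:R^-1))).
  by rewrite [RHS]mulrC !mulrA.
by move=> j ji; rewrite count_rcons eq_sym (negbTE ji) addn0.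
Qed.

(* Every factor is a ratio of Gamma values at positive arguments. *)
Lemma count_factor_gt0 (y : seq X) : 0 < count_factor G y.
Proof.
have half_gt0 : (0 : R) < 2%:R^-1 by rewrite invr_gt0 ltr0n.
apply: prodr_gt0 => j _.
by rewrite (Gamma_ratio_gt0 hG) ?ltr_wpDl ?ler0n.
Qed.

Lemma PBayes_cond_Gsum (x : seq X) (i : X) : symset x != set0 ->
  PBayes_cond G x i = ((count_mem i x)%:R + 2%:R^-1) *
    Gsum G X (size x).+1%:R #|i |: symset x| / Gsum G X (size x)%:R #|symset x|.
Proof.
move=> x_ne0; have xi_ne0 : symset (rcons x i) != set0.
  by apply/set0Pn; exists i; rewrite symset_rcons setU11.
have D_neq0 : #|X|%:R != 0 :> R by rewrite pnatr_eq0 -lt0n; apply/card_gt0P; exists i.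
have K_neq0 : count_factor G x != 0 by rewrite gt_eqF ?count_factor_gt0.
have g_neq0 : Gsum G X (size x)%:R #|symset x| != 0.
  by rewrite gt_eqF ?(Gsum_gt0 hG) ?ler0n ?card_gt0 ?x_ne0 ?max_card.
rewrite /PBayes_cond !PBayes_Gsum // count_factor_rcons size_rcons symset_rcons.
by field; rewrite g_neq0 D_neq0 K_neq0.
Qed.

End Prediction.

Theorem mainTheorem8 (R : realFieldType) (G : R -> R) (hG : is_Gamma G)
  (X : finType) (x : seq X) (ht : (1 <= size x)%N) (i : X) :
  let t := size x in
  let m := #|symset x| in
  let D := #|X| in
  let beta := betaT G X t m in
  PBayes_cond G x i =
    if (0 < count_mem i x)%N then
      ((count_mem i x)%:R + 2%:R^-1) / (t%:R + m%:R / 2%:R + beta)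
    else
      (beta / (D%:R - m%:R)) / (t%:R + m%:R / 2%:R + beta).
Proof.
move=> t m D beta.
have x_ne0 : symset x != set0.
  by apply/set0Pn; exists (head i x); rewrite inE -nth0 mem_nth.
have m_range : (1 <= m <= D)%N by rewrite card_gt0 x_ne0 max_card.
have g_gt0 : 0 < Gsum G X t.+1%:R m by rewrite (Gsum_gt0 hG) ?ler0n.
have norm_gt0 : 0 < t%:R + m%:R / 2%:R + beta.
  have := Gsum_gt0 hG (ler0n _ t) m_range.
  by rewrite (Gsum_betaT hG _ m_range) pmulr_lgt0.
rewrite PBayes_cond_Gsum // (Gsum_betaT hG _ m_range) -/t -/m -/beta.
(* A seen symbol leaves the alphabet, hence Gsum(t+1, m), unchanged. *)
case: ifPn => [ci_gt0 | ci_eq0].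
  have i_in : i \in symset x by rewrite inE -has_pred1 has_count.
  rewrite (setUidPr _) ?sub1set // -/m.
  by rewrite invfM mulrA mulrAC mulfK ?gt_eqF.
(* A new symbol enlarges the alphabet to m + 1 < D + 1, and beta_t/(D-m)
   is exactly (1/2) Gsum(t+1, m+1) / Gsum(t+1, m). *)
have i_out : i \notin symset x by rewrite inE -has_pred1 has_count.
have m_ltD : (m < D)%N by have := max_card (i |: symset x); rewrite cardsU1 i_out.
have beta_half : beta / (D%:R - m%:R) =
    2%:R^-1 * (Gsum G X t.+1%:R m.+1 / Gsum G X t.+1%:R m).
  rewrite /beta /betaT !gammaT_Gsum; field.
  by rewrite gt_eqF //= gt_eqF // subr_gt0 ltr_nat.
rewrite cardsU1 i_out add1n -/m beta_half (count_memPn _) ?add0r; last first.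
  by move: i_out; rewrite inE.
by rewrite invfM !mulrA mulrAC.
Qed.
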